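(* Let $1\le k\le n$ be integers and $\eta=k/n$. For $\mu'\in\mathbb R$ let $P_{\mu'}=\mathcal N(\mu',1)^{\otimes n}$, and for $\delta\ge0$ let $Q_{\mu',\delta}$ be the law of $X+\delta e_I$, where $X\sim P_{\mu'}$, $I\subseteq[n]$ is a uniformly random subset of size $k$ independent of $X$, and $e_I\in\{0,1\}^n$ is the indicator vector of $I$. Then for every $\mu'\in\mathbb R$ and $\delta\ge0$, \[\chi^2(Q_{\mu',\delta}\,\|\,P_{\mu'+\eta\delta})\le\exp\!\Big(\frac{k^2}{n}\big(e^{\delta^2}-1-\delta^2\big)\Big)-1.\]
   Context: For probability measures $Q\ll P$, $\chi^2(Q\|P)=\mathbb E_P\big[(\frac{dQ}{dP}-1)^2\big]$. *)

From HB Require Import structures.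
From mathcomp Require Import all_boot all_order all_algebra.
From mathcomp Require Import all_classical all_reals all_analysis.

Set Implicit Arguments.
Unset Strict Implicit.
Unset Printing Implicit Defensive.

Import Order.TTheory GRing.Theory Num.Theory.
Local Open Scope ring_scope.

Section Defs.
Context {R : realType}.

(* Points of R^n are represented as x : nat -> R; only coordinates 0..n-1 matter. *)

(* Expectation of a nonnegative functional g under P_mu = N(mu,1)^{(x) n}:
   the n coordinates are integrated one after the other against the
   library's normal probability measure N(mu,1) (independent coordinates;
   by Tonelli this equals the integral against the product measure). *)
Fixpoint gauss_prod_expect (mu : R) (n : nat) (g : (nat -> R) -> \bar R)
    : \bar R :=
  match n with
  | 0 => g (fun _ => 0)
  | m.+1 => (\int[normal_prob mu 1]_(t in [set: R])
               gauss_prod_expect mu m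
                 (fun x => g (fun i => if i == m then t else x i)))%E
  end.

Definition gauss_prod_pdf (n : nat) (mu : R) (x : nat -> R) : R :=
  \prod_(i < n) normal_pdf mu 1 (x i).

(* Lebesgue density on R^n of Q_{mu,delta} = law of X + delta e_I with
   X ~ P_mu and I uniform among the k-subsets of [n], independent of X:
   a uniform mixture over I of the Gaussians N(mu 1 + delta e_I, Id). *)
Definition planted_pdf (n k : nat) (mu delta : R) (x : nat -> R) : R :=
  ('C(n, k)%:R)^-1 *
  \sum_(I : {set 'I_n} | #|I| == k)
     \prod_(i < n) normal_pdf (mu + delta * (i \in I)%:R) 1 (x i).

(* chi^2(Q || P_mu) = E_{P_mu}[(dQ/dP_mu - 1)^2] for a law Q on R^n with
   Lebesgue density q; dQ/dP_mu = q / p_mu (p_mu > 0 everywhere). *)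
Definition chi2_gauss_prod (n : nat) (q : (nat -> R) -> R) (mu : R) : \bar R :=
  gauss_prod_expect mu n
    (fun x => ((q x / gauss_prod_pdf n mu x - 1) ^+ 2)%:E).

End Defs.

(* Put c = mu' + eta delta and a_I = mu' + delta 1_I.  The likelihood ratio
   dQ/dP_c is the average over the k-subsets I of prod_i l(a_I(i), x_i), where
   l(a, t) = N(a,1)(t) / N(c,1)(t), and E_{N(c,1)}[l(a) l(b)] = exp((a-c)(b-c)).
   Expanding the square therefore gives
     1 + chi^2 = C(n,k)^-2 exp(-delta^2 k^2/n) sum_{I,J} (1 + u)^{|I cap J|}
   with u = exp(delta^2) - 1.  Expanding (1 + u)^{|I cap J|} over the common
   subsets S of I and J, and using that at most eta^{|S|} C(n,k) of the
   k-subsets contain S, bounds the double sum by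
   C(n,k)^2 (1 + eta u)^k <= C(n,k)^2 exp(u k^2/n). *)

From HB Require Import structures.
From mathcomp Require Import all_boot all_order all_algebra.
From mathcomp Require Import all_classical all_reals all_analysis.
From mathcomp Require Import measurable_realfun.
From mathcomp Require Import ring zify.
Import Order.TTheory GRing.Theory Num.Theory.
Local Open Scope ring_scope.

Section normal_likelihood_ratio.
Context {R : realType}.
Local Notation mu := (@lebesgue_measure R).
Implicit Types a b c t : R.

Lemma normal_pdf1E a t :
  normal_pdf a 1 t = normal_peak 1 * expR (- (t - a) ^+ 2 / 2).
Proof. by rewrite normal_pdfE ?oner_neq0// /normal_fun expr1n. Qed.

Definition normal_lr a c t : R := normal_pdf a 1 t / normal_pdf c 1 t.

Lemma normal_lrE a c t :
  normal_lr a c t = expR ((a - c) * (t - c) - (a - c) ^+ 2 / 2).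
Proof.
rewrite /normal_lr !normal_pdf1E invfM mulrACA.
rewrite divff ?gt_eqF ?normal_peak_gt0 ?oner_neq0// mul1r -expRN -expRD.
by congr expR; field.
Qed.

Lemma normal_lr_ge0 a c t : 0 <= normal_lr a c t.
Proof. by rewrite normal_lrE expR_ge0. Qed.

Lemma normal_lrxx c t : normal_lr c c t = 1.
Proof. by rewrite normal_lrE subrr mul0r expr0n /= mul0r subrr expR0. Qed.

Lemma measurable_normal_lr a c : measurable_fun setT (normal_lr a c).
Proof.
rewrite (_ : normal_lr a c =
    fun t => expR ((a - c) * (t - c) - (a - c) ^+ 2 / 2)).
  apply: measurableT_comp => //; apply: measurable_funB => //.
  by apply: measurable_funM => //; exact: measurable_funB.
by apply/funext => t; rewrite normal_lrE.
Qed.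

Lemma normal_lrM_pdf a b c t :
  normal_lr a c t * normal_lr b c t * normal_pdf c 1 t =
  expR ((a - c) * (b - c)) * normal_pdf (a + b - c) 1 t.
Proof.
rewrite !normal_lrE !normal_pdf1E -!expRD [RHS]mulrCA -expRD mulrCA -expRD.
by congr (_ * expR _); field.
Qed.

Local Open Scope ereal_scope.

Lemma integral_normal_prob (m s : R) (g : R -> \bar R) :
  (forall t, 0 <= g t) -> measurable_fun setT g ->
  \int[normal_prob m s]_t g t = \int[mu]_t (g t * (normal_pdf m s t)%:E).
Proof.
move=> g0 mg; have dom := normal_prob_dominates m s.
rewrite -(Radon_Nikodym_SigmaFinite.change_of_variables dom)//.
have intf := Radon_Nikodym_SigmaFinite.f_integrable dom.
have mpdf : measurable_fun setT (fun t => (normal_pdf m s t)%:E).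
  by apply/measurable_EFinP; exact: measurable_normal_pdf.
apply: ae_eq_integral => //.
- by apply: emeasurable_funM => //; exact: measurable_int intf.
- exact: emeasurable_funM.
- apply: ae_eqe_mul2l; apply: integral_ae_eq => // E _ mE.
  by rewrite -Radon_Nikodym_SigmaFinite.f_integral.
Qed.

Lemma measurable_normal_lrM a b c :
  measurable_fun setT (fun t => (normal_lr a c t * normal_lr b c t)%:E).
Proof.
by apply/measurable_EFinP/measurable_funM; exact: measurable_normal_lr.
Qed.

Lemma integral_normal_lrM a b c :
  \int[normal_prob c 1]_t (normal_lr a c t * normal_lr b c t)%:E =
  (expR ((a - c) * (b - c)))%:E.
Proof.
rewrite integral_normal_prob; last 2 first.
- by move=> t; rewrite lee_fin mulr_ge0 ?normal_lr_ge0.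
- exact: measurable_normal_lrM.
under eq_integral do rewrite -EFinM normal_lrM_pdf EFinM.
rewrite integralZl//; last exact: integrable_normal_pdf.
by rewrite integral_normal_pdf mule1.
Qed.

Lemma integrable_normal_lrM a b c :
  (normal_prob c 1).-integrable setT
    (fun t => (normal_lr a c t * normal_lr b c t)%:E).
Proof.
apply/integrableP; split; first exact: measurable_normal_lrM.
have lrM_ge0 t : 0 <= (normal_lr a c t * normal_lr b c t)%:E.
  by rewrite lee_fin mulr_ge0 ?normal_lr_ge0.
under eq_integral do rewrite gee0_abs//.
by rewrite integral_normal_lrM ltry.
Qed.

End normal_likelihood_ratio.

Section gauss_prod_expect.
Context {R : realType}.

Lemma eq_gauss_prod_expect (c : R) n (g h : (nat -> R) -> \bar R) :
  g =1 h -> gauss_prod_expect c n g = gauss_prod_expect c n h.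
Proof. by move=> /funext ->. Qed.

Lemma gauss_prod_expect_sum_prod (c : R) n (J : finType) (w : J -> R)
    (F : J -> nat -> R -> R) (e : J -> nat -> R) :
  (forall j i, (normal_prob c 1).-integrable [set: R] (EFin \o F j i)) ->
  (forall j i,
     (\int[normal_prob c 1]_(t in [set: R]) (F j i t)%:E)%E = (e j i)%:E) ->
  gauss_prod_expect c n
    (fun x => (\sum_j w j * \prod_(i < n) F j i (x i))%:E) =
  (\sum_j w j * \prod_(i < n) e j i)%:E.
Proof.
move=> intF intFE; elim: n w => [|n IHn] w /=.
  by congr EFin; apply: eq_bigr => j _; rewrite !big_ord0.
transitivity (\int[normal_prob c 1]_(t in [set: R])
   \sum_j (w j * \prod_(i < n) e j i)%:E * (F j n t)%:E)%E.
  apply: eq_integral => t _.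
  rewrite (@eq_gauss_prod_expect _ _ _ (fun x =>
    (\sum_j (w j * F j n t) * \prod_(i < n) F j i (x i))%:E)); last first.
    move=> x; congr EFin; apply: eq_bigr => j _.
    rewrite big_ord_recr /= eqxx.
    under eq_bigr => i _ do rewrite ltn_eqF//.
    ring.
  rewrite IHn sumEFin; congr EFin; apply: eq_bigr => j _; ring.
rewrite integral_sum//; last first.
  by move=> j; apply: integrableZl => //; exact: intF.
rewrite -sumEFin; apply: eq_bigr => j _.
rewrite integralZl//; last exact: intF.
by rewrite intFE -EFinM big_ord_recr /= mulrA.
Qed.

Lemma gauss_prod_expect_sqr_sum_lr (c : R) n (J : finType) (w : J -> R)
    (a : J -> nat -> R) :
  gauss_prod_expect c n (fun x =>
    ((\sum_j w j * \prod_(i < n) normal_lr (a j i) c (x i)) ^+ 2)%:E) =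
  (\sum_j \sum_j' w j * w j' *
     \prod_(i < n) expR ((a j i - c) * (a j' i - c)))%:E.
Proof.
pose F (p : J * J) i t := normal_lr (a p.1 i) c t * normal_lr (a p.2 i) c t.
rewrite (@eq_gauss_prod_expect _ _ _ (fun x =>
    (\sum_(p : J * J) w p.1 * w p.2 * \prod_(i < n) F p i (x i))%:E)).
  rewrite (@gauss_prod_expect_sum_prod _ _ _ _ F
    (fun p i => expR ((a p.1 i - c) * (a p.2 i - c)))); last 2 first.
  - by move=> p i; exact: integrable_normal_lrM.
  - by move=> p i; exact: integral_normal_lrM.
  by congr EFin; rewrite pair_bigA.
move=> x; congr EFin; rewrite expr2 mulr_suml.
under eq_bigr do rewrite mulr_sumr.
rewrite pair_bigA; apply: eq_bigr => -[j j'] _ /=.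
by rewrite [in RHS]big_split /=; ring.
Qed.

End gauss_prod_expect.

Section overlap.
Variables (R : realFieldType) (T : finType).
Implicit Types (A I J S : {set T}) (k : nat).

Lemma sum_subset_expr A (x : R) :
  \sum_(S : {set T} | S \subset A) x ^+ #|S| = (1 + x) ^+ #|A|.
Proof.
have card_lt S : (#|S| < #|T|.+1)%N by rewrite ltnS max_card.
rewrite (partition_big (fun S : {set T} => inord #|S| : 'I_#|T|.+1) xpredT) //=.
rewrite (eq_bigr (fun s : 'I_#|T|.+1 => x ^+ s *+ 'C(#|A|, s))); last first.
  move=> s _; rewrite (eq_bigr (fun _ => x ^+ s)); last first.
    by move=> S /andP[_ /eqP <-]; rewrite inordK.
  rewrite -cards_draws -sumr_const; apply: eq_bigl => S; rewrite inE.
  congr (_ && _); apply/eqP/eqP => [<-|Ss]; first by rewrite inordK.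
  by apply: val_inj; rewrite /= inordK.
rewrite addrC exprD1n -!(big_mkord xpredT (fun s => x ^+ s *+ 'C(#|A|, s))).
rewrite (big_cat_nat _ (n := #|A|.+1)) //=.
rewrite [X in _ + X]big1_seq ?addr0 // => s /andP[_].
by rewrite mem_index_iota => /andP[As _]; rewrite bin_small.
Qed.

Lemma sum_draws_const k (x : R) :
  \sum_(I : {set T} | #|I| == k) x = x *+ 'C(#|T|, k).
Proof.
by rewrite -card_draws -sumr_const; apply: eq_bigl => I; rewrite inE.
Qed.

Lemma bin_sub_le (N k s : nat) : (k <= N)%N -> (s <= k)%N ->
  ('C(N - s, k - s)%:R : R) <= (k%:R / N%:R) ^+ s * 'C(N, k)%:R.
Proof.
move=> kN; elim: s => [|s IHs] sk; first by rewrite !subn0 expr0 mul1r.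
have N_gt0 : (0 < N)%N by lia.
have Ns_gt0 : (0 : R) < (N - s)%:R by rewrite ltr0n; lia.
have bin_step : ('C(N - s.+1, k - s.+1)%:R : R) =
    (k - s)%:R / (N - s)%:R * 'C(N - s, k - s)%:R.
  apply: (mulfI (lt0r_neq0 Ns_gt0)); rewrite mulrA mulrCA divff ?gt_eqF// mulr1.
  rewrite -!natrM; congr _%:R; have := mul_bin_diag (N - s) (k - s.+1).
  by rewrite -subnS -subSn// subSS.
have ratio_le : (k - s)%:R / (N - s)%:R <= k%:R / N%:R :> R.
  rewrite ler_pdivrMr// mulrAC ler_pdivlMr ?ltr0n// !natrB; [|lia|lia].
  rewrite mulrBl mulrBr lerD2l lerN2 -!natrM ler_nat mulnC leq_mul2l kN.
  by rewrite orbT.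
have -> : (k%:R / N%:R) ^+ s.+1 * 'C(N, k)%:R =
    k%:R / N%:R * ((k%:R / N%:R) ^+ s * 'C(N, k)%:R) :> R.
  by rewrite exprSr; ring.
rewrite bin_step; apply: ler_pM; rewrite ?divr_ge0//.
exact: IHs (ltnW sk).
Qed.

Definition nsupsets k S := #|[set I : {set T} | (#|I| == k) && (S \subset I)]|.

Lemma nsupsets_eq0 k S : (k < #|S|)%N -> nsupsets k S = 0%N.
Proof.
move=> kS; apply/eqP; rewrite cards_eq0; apply/eqP/setP => I; rewrite !inE.
by apply/negbTE/andP => -[/eqP Ik /subset_leq_card]; lia.
Qed.

Lemma nsupsets_le_bin k S : (nsupsets k S <= 'C(#|T| - #|S|, k - #|S|))%N.
Proof.
have [Sk|/nsupsets_eq0->//] := leqP #|S| k.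
rewrite /nsupsets -(@card_in_imset _ _ (fun I => I :\: S)); last first.
  move=> I1 I2; rewrite !inE => /andP[_ SI1] /andP[_ SI2] eqD.
  apply/setP => x; have := congr1 (fun A => x \in A) eqD; rewrite /= !inE.
  have [xS _|//] := boolP (x \in S).
  by rewrite (fintype.subsetP SI1) ?(fintype.subsetP SI2).
have -> : (#|T| - #|S| = #|~: S|)%N by rewrite -(cardsC S) addKn.
rewrite -cards_draws; apply: subset_leq_card.
apply/fintype.subsetP => _ /imsetP[I + ->]; rewrite !inE => /andP[/eqP <- SI].
by rewrite subsetDr cardsD (finset.setIidPr SI) eqxx.
Qed.

Lemma nsupsets_le k S : (k <= #|T|)%N ->
  (nsupsets k S)%:R <= (k%:R / #|T|%:R) ^+ #|S| * 'C(#|T|, k)%:R :> R.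
Proof.
move=> kT; have [Sk|/nsupsets_eq0->] := leqP #|S| k; last first.
  by rewrite mulr_ge0 ?exprn_ge0 ?divr_ge0.
by apply: le_trans (bin_sub_le _ _ _ kT Sk); rewrite ler_nat nsupsets_le_bin.
Qed.

Lemma sum_draws_sum_subset k (F : {set T} -> R) :
  \sum_(I : {set T} | #|I| == k) \sum_(S : {set T} | S \subset I) F S =
  \sum_(S : {set T}) (nsupsets k S)%:R * F S.
Proof.
rewrite (exchange_big_dep xpredT) //=; apply: eq_bigr => S _.
by rewrite mulr_natl /nsupsets -sumr_const; apply: eq_bigl => I; rewrite inE.
Qed.

Lemma sum_draws_expr_card_setI_le k (u : R) : (k <= #|T|)%N -> 0 <= u ->
  \sum_(I : {set T} | #|I| == k) \sum_(J : {set T} | #|J| == k)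
      (1 + u) ^+ #|I :&: J|
  <= 'C(#|T|, k)%:R ^+ 2 * (1 + u * (k%:R / #|T|%:R)) ^+ k.
Proof.
move=> kT u_ge0; set z := k%:R / #|T|%:R; set C : R := 'C(#|T|, k)%:R.
pose N S : R := (nsupsets k S)%:R.
have sum_setI I : \sum_(J : {set T} | #|J| == k) (1 + u) ^+ #|I :&: J| =
    \sum_(S : {set T} | S \subset I) N S * u ^+ #|S|.
  under eq_bigr do rewrite -sum_subset_expr.
  under eq_bigr => J _.
    rewrite (eq_bigl (fun S => (S \subset I) && (S \subset J))); last first.
      by move=> S; rewrite finset.subsetI.
    rewrite big_mkcondl; over.
  rewrite sum_draws_sum_subset [RHS]big_mkcond; apply: eq_bigr => S _.
  by rewrite (fun_if (fun v => N S * v)) mulr0.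
under eq_bigr do rewrite sum_setI.
rewrite sum_draws_sum_subset.
apply: (@le_trans _ _ (\sum_(S : {set T}) C * (N S * (u * z) ^+ #|S|))).
  apply: ler_sum => S _.
  have -> : C * (N S * (u * z) ^+ #|S|) = N S * u ^+ #|S| * (z ^+ #|S| * C).
    by rewrite exprMn; ring.
  by rewrite mulrC ler_wpM2l ?mulr_ge0 ?exprn_ge0// nsupsets_le.
rewrite -mulr_sumr -sum_draws_sum_subset.
under eq_bigr => I /eqP Ik do rewrite sum_subset_expr Ik.
by rewrite sum_draws_const -mulr_natl -/C expr2 mulrA.
Qed.

Lemma sumr_mem A : \sum_(t : T) ((t \in A)%:R : R) = #|A|%:R.
Proof.
rewrite -sum1_card natr_sum [RHS]big_mkcond; apply: eq_bigr => t _.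
by case: (t \in A).
Qed.

End overlap.

Lemma big_option (V : nmodType) (T : finType) (F : option T -> V) :
  \sum_(j : option T) F j = F None + \sum_(t : T) F (Some t).
Proof.
have -> : index_enum (option T) = None :: map Some (index_enum T).
  by rewrite /index_enum !unlock /= /option_enum unlock.
by rewrite big_cons big_map.
Qed.

Section planted.
Context {R : realType}.
Variables (n k : nat) (mu' delta : R).

Definition planted_center : R := mu' + k%:R / n%:R * delta.

Definition planted_mean (I : {set 'I_n}) (i : nat) : R :=
  mu' + delta * (i \in [seq val o | o <- enum I])%:R.

Lemma planted_meanE I (i : 'I_n) :
  planted_mean I i = mu' + delta * (i \in I)%:R.
Proof. by rewrite /planted_mean (mem_map val_inj) mem_enum. Qed.

(* [None] carries the constant term [-1] of [dQ/dP_c - 1], [Some I] the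
   planted set [I]. *)
Definition mixture_weight (j : option {set 'I_n}) : R :=
  if j is Some A then (if #|A| == k then 'C(n, k)%:R^-1 else 0) else -1.

Definition mixture_mean (j : option {set 'I_n}) : nat -> R :=
  if j is Some A then planted_mean A else fun=> planted_center.

Lemma planted_lr_sub1 x :
  planted_pdf n k mu' delta x / gauss_prod_pdf n planted_center x - 1 =
  \sum_j mixture_weight j *
    \prod_(i < n) normal_lr (mixture_mean j i) planted_center (x i).
Proof.
rewrite big_option /= (eq_bigr (fun=> 1)) => [|i _]; last exact: normal_lrxx.
rewrite big1_eq mulN1r addrC; congr (_ + _).
under eq_bigr do rewrite (fun_if (fun v => v * _)) mul0r.
rewrite -big_mkcond /= -big_distrr /= /planted_pdf /gauss_prod_pdf -mulrA.
rewrite mulr_suml; congr (_ * _); apply: eq_bigr => I _.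
by rewrite -prodf_div; apply: eq_bigr => i _; rewrite /normal_lr planted_meanE.
Qed.

Hypotheses (k_gt0 : (0 < k)%N) (kn : (k <= n)%N).

Lemma sum_planted_weight : \sum_(A : {set 'I_n}) mixture_weight (Some A) = 1.
Proof.
rewrite /= -big_mkcond sum_draws_const card_ord.
by rewrite -(mulr_natr ('C(n, k)%:R)^-1) mulVf// pnatr_eq0 -lt0n bin_gt0.
Qed.

Lemma planted_cross_moment (I J : {set 'I_n}) : #|I| = k -> #|J| = k ->
  \prod_(i < n) expR ((planted_mean I i - planted_center) *
                      (planted_mean J i - planted_center)) =
  expR (- (delta ^+ 2 * k%:R ^+ 2 / n%:R)) * expR (delta ^+ 2) ^+ #|I :&: J|.
Proof.
move=> cardI cardJ; have n_neq0 : n%:R != 0 :> R.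
  by rewrite pnatr_eq0 -lt0n (leq_trans k_gt0 kn).
rewrite -expR_sum -expRM_natl -expRD; congr expR; set z : R := k%:R / n%:R.
transitivity (\sum_(i < n) (delta ^+ 2 * ((i \in I)%:R * (i \in J)%:R) -
    z * delta ^+ 2 * (i \in I)%:R - z * delta ^+ 2 * (i \in J)%:R +
    z ^+ 2 * delta ^+ 2)).
  by apply: eq_bigr => i _; rewrite !planted_meanE /planted_center -/z; ring.
rewrite !big_split /= !sumrN -!mulr_sumr !sumr_mem sumr_const card_ord.
under eq_bigr do rewrite -natrM mulnb -finset.in_setI.
by rewrite sumr_mem cardI cardJ /z; field.
Qed.

Lemma planted_second_moment :
  \sum_j \sum_j' mixture_weight j * mixture_weight j' *
    \prod_(i < n) expR ((mixture_mean j i - planted_center) *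
                        (mixture_mean j' i - planted_center)) =
  expR (- (delta ^+ 2 * k%:R ^+ 2 / n%:R)) / 'C(n, k)%:R ^+ 2 *
    \sum_(I : {set 'I_n} | #|I| == k) \sum_(J : {set 'I_n} | #|J| == k)
      expR (delta ^+ 2) ^+ #|I :&: J| - 1.
Proof.
have C_neq0 : 'C(n, k)%:R != 0 :> R by rewrite pnatr_eq0 -lt0n bin_gt0.
have cross0l (f : 'I_n -> R) : \prod_(i < n) expR (0 * f i) = 1.
  by apply: big1 => i _; rewrite mul0r expR0.
have cross0r (f : 'I_n -> R) : \prod_(i < n) expR (f i * 0) = 1.
  by apply: big1 => i _; rewrite mulr0 expR0.
have row_None : \sum_j' mixture_weight None * mixture_weight j' *
    \prod_(i < n) expR ((mixture_mean None i - planted_center) *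
                        (mixture_mean j' i - planted_center)) = 0.
  under eq_bigr do rewrite /= subrr cross0l mulr1.
  by rewrite -mulr_sumr big_option sum_planted_weight /= addNr mulr0.
have row_Some A : \sum_j' mixture_weight (Some A) * mixture_weight j' *
    \prod_(i < n) expR ((mixture_mean (Some A) i - planted_center) *
                        (mixture_mean j' i - planted_center)) =
    - mixture_weight (Some A) + \sum_J mixture_weight (Some A) *
      mixture_weight (Some J) * \prod_(i < n)
        expR ((planted_mean A i - planted_center) *
              (planted_mean J i - planted_center)).
  by rewrite big_option /= subrr cross0r mulr1 mulrN1.
rewrite big_option row_None add0r.
under eq_bigr do rewrite row_Some.
rewrite big_split /= sumrN sum_planted_weight addrC; congr (_ - _).
rewrite [in RHS]big_mkcond mulr_sumr; apply: eq_bigr => A _ /=.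
have [cardA|_] := eqVneq #|A| k; last first.
  by rewrite mulr0; apply: big1 => J _; rewrite !mul0r.
rewrite [in RHS]big_mkcond mulr_sumr; apply: eq_bigr => J _ /=.
have [cardJ|_] := eqVneq #|J| k; last by rewrite !mulr0 mul0r.
by rewrite planted_cross_moment //; field.
Qed.

Lemma planted_overlap_le :
  expR (- (delta ^+ 2 * k%:R ^+ 2 / n%:R)) / 'C(n, k)%:R ^+ 2 *
    \sum_(I : {set 'I_n} | #|I| == k) \sum_(J : {set 'I_n} | #|J| == k)
      expR (delta ^+ 2) ^+ #|I :&: J|
  <= expR (k%:R ^+ 2 / n%:R * (expR (delta ^+ 2) - 1 - delta ^+ 2)).
Proof.
have n_gt0 : (0 : R) < n%:R by rewrite ltr0n (leq_trans k_gt0 kn).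
have C_gt0 : (0 : R) < 'C(n, k)%:R by rewrite ltr0n bin_gt0.
set u := expR (delta ^+ 2) - 1; set z : R := k%:R / n%:R.
have u_ge0 : 0 <= u.
  by rewrite subr_ge0 (le_trans _ (expR_ge1Dx _)) // lerDl sqr_ge0.
have -> : expR (delta ^+ 2) = 1 + u by rewrite /u addrC subrK.
have kT : (k <= #|'I_n|)%N by rewrite card_ord.
have := @sum_draws_expr_card_setI_le _ _ _ _ kT u_ge0.
rewrite card_ord -/z => overlap.
apply: le_trans (ler_wpM2l _ overlap) _.
  by rewrite mulr_ge0 ?expR_ge0 ?invr_ge0 ?exprn_ge0 ?ltW.
rewrite mulrA divfK ?expf_neq0 ?gt_eqF//.
apply: le_trans (ler_wpM2l (expR_ge0 _) (lerXn2r _ _ _ (expR_ge1Dx (u * z)))) _.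
- by rewrite nnegrE addr_ge0 ?mulr_ge0 ?divr_ge0.
- by rewrite nnegrE expR_ge0.
suff -> : expR (- (delta ^+ 2 * k%:R ^+ 2 / n%:R)) * expR (u * z) ^+ k =
    expR (k%:R ^+ 2 / n%:R * (u - delta ^+ 2)) by [].
by rewrite -expRM_natl -expRD /z; congr expR; field; rewrite gt_eqF.
Qed.

End planted.

Theorem lemmaG1 (R : realType) (n k : nat) (mu' delta : R) :
  (1 <= k)%N -> (k <= n)%N -> 0 <= delta ->
  (chi2_gauss_prod n (planted_pdf n k mu' delta)
       (mu' + (k%:R / n%:R) * delta)
   <= (expR ((k%:R ^+ 2 / n%:R) * (expR (delta ^+ 2) - 1 - delta ^+ 2)) - 1)%:E)%E.
Proof.
(* The bound holds for every real delta. *)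
move=> k_gt0 kn _; rewrite /chi2_gauss_prod -/(planted_center n k mu' delta).
under eq_gauss_prod_expect do rewrite planted_lr_sub1.
rewrite gauss_prod_expect_sqr_sum_lr planted_second_moment// lee_fin lerD2r.
exact: planted_overlap_le.
Qed.
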